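(* Let $R$ be a ring with identity and $a\in R$. Then $a$ is quasipolar if and only if $a=s+q$ where $s$ is strongly regular, $s\in\mathrm{comm}^2(a)$, $q\in R^{qnil}$, and $sq=qs=0$.
   Context: For $a\in R$, $\mathrm{comm}(a)=\{x\in R\mid xa=ax\}$, $\mathrm{comm}^2(a)=\{x\in R\mid xy=yx\text{ for all }y\in\mathrm{comm}(a)\}$. $U(R)$ is the unit group and $R^{qnil}=\{a\in R\mid 1+ax\in U(R)\text{ for every }x\in\mathrm{comm}(a)\}$. An element $a\in R$ is quasipolar if there is an idempotent $p\in\mathrm{comm}^2(a)$ with $a+p\in U(R)$ and $ap\in R^{qnil}$. An element $s$ is strongly regular if $s=sbs$ for some $b\in R$ with $bs=sb$. *)

From HB Require Import structures.
From mathcomp Require Import all_boot all_order all_algebra.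
Set Implicit Arguments. Unset Strict Implicit. Unset Printing Implicit Defensive.
Import GRing.Theory.
Local Open Scope ring_scope.

Definition comm (R : unitRingType) (a : R) : R -> Prop := fun x => x * a = a * x.

Definition comm2 (R : unitRingType) (a : R) : R -> Prop :=
  fun x => forall y, comm a y -> x * y = y * x.

Definition qnil (R : unitRingType) (a : R) : Prop :=
  forall x, comm a x -> (1 + a * x) \is a GRing.unit.

Definition quasipolar (R : unitRingType) (a : R) : Prop :=
  exists p : R, p * p = p /\ comm2 a p /\ (a + p) \is a GRing.unit /\ qnil (a * p).

Definition strongly_regular (R : unitRingType) (s : R) : Prop :=
  exists b : R, s = s * b * s /\ b * s = s * b.

From mathcomp Require Import all_boot all_order all_algebra.
Local Open Scope ring_scope.
Import GRing.Theory.

(* Forward: for the spectral idempotent p of a, put s = a(1 - p) and q = ap.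
   Since u = a + p is a unit commuting with the idempotent 1 - p and
   s = u(1 - p), s is strongly regular (with inner inverse u^-1(1 - p)).

   Backward: a strongly regular s has a group inverse g (gs = sg, sgs = s,
   gsg = g), namely g = bsb.  The group inverse commutes with everything that
   commutes with s, so e = sg lies in comm^2(a) together with s.  Then
   p = 1 - e is the required idempotent: a + p = (s + 1 - e)(1 + q) is a
   product of units and ap = q is quasinilpotent. *)

Section Quasipolar.

Variable R : unitRingType.
Implicit Types a e g p q s u x y : R.

Lemma comm2_self a : comm2 a a.
Proof. by move=> y ya; rewrite /comm in ya. Qed.

Lemma comm2_comm a x : comm2 a x -> x * a = a * x.
Proof. by move=> xa; apply: xa. Qed.

Lemma comm2_1 a : comm2 a 1.
Proof. by move=> y _; rewrite mul1r mulr1. Qed.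

Lemma comm2M a x y : comm2 a x -> comm2 a y -> comm2 a (x * y).
Proof.
by move=> xa ya z za; apply/commr_sym/commrM; apply/commr_sym; [apply: xa|apply: ya].
Qed.

Lemma comm2B a x y : comm2 a x -> comm2 a y -> comm2 a (x - y).
Proof.
by move=> xa ya z za; apply/commr_sym/commrB; apply/commr_sym; [apply: xa|apply: ya].
Qed.

Lemma idemC e : e * e = e -> (1 - e) * (1 - e) = 1 - e.
Proof. by move=> ee; rewrite mulrBr mulr1 mulrBl mul1r ee subrr subr0. Qed.

Lemma idem_mulC e : e * e = e -> e * (1 - e) = 0.
Proof. by move=> ee; rewrite mulrBr mulr1 ee subrr. Qed.

Lemma idemC_mul e : e * e = e -> (1 - e) * e = 0.
Proof. by move=> ee; rewrite mulrBl mul1r ee subrr. Qed.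

Lemma idem_comm_of_corners e y :
  e * y * (1 - e) = 0 -> (1 - e) * y * e = 0 -> e * y = y * e.
Proof.
rewrite mulrBr mulr1 mulrBl mul1r mulrBl => /subr0_eq eye /subr0_eq yee.
by rewrite eye yee.
Qed.

Lemma absorb_r_idemC x e : x * e = x -> x * (1 - e) = 0.
Proof. by move=> xe; rewrite mulrBr mulr1 xe subrr. Qed.

Lemma absorb_l_idemC x e : e * x = x -> (1 - e) * x = 0.
Proof. by move=> ex; rewrite mulrBl mul1r ex subrr. Qed.

Lemma unit_idem_strongly_regular u e :
  u \is a GRing.unit -> e * e = e -> e * u = u * e -> strongly_regular (u * e).
Proof.
move=> uU ee eu; have eV : e * u^-1 = u^-1 * e by apply: commrV.
have left_inv : u^-1 * e * (u * e) = e by rewrite -mulrA (mulrA e) eu -mulrA mulKr // ee.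
have right_inv : u * e * (u^-1 * e) = e by rewrite -mulrA (mulrA e) eV -mulrA mulVKr // ee.
exists (u^-1 * e); split; last by rewrite left_inv right_inv.
by rewrite -mulrA left_inv -mulrA ee.
Qed.

Lemma qnil_unit1 q : qnil q -> (1 + q) \is a GRing.unit.
Proof. by move=> qn; rewrite -[q]mulr1; apply: qn; rewrite /comm mulr1 mul1r. Qed.

Definition group_inverse s g : Prop := g * s = s * g /\ s * g * s = s /\ g * s * g = g.

Lemma strongly_regular_group_inverse s :
  strongly_regular s -> exists g, group_inverse s g.
Proof.
move=> [b [sbs bs]]; exists (b * s * b).
have sb_s x : s * (b * (s * x)) = s * x by rewrite !mulrA -sbs.
split; first by rewrite -!mulrA bs !mulrA bs.
by split; rewrite -!mulrA ?sb_s // !mulrA -sbs.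
Qed.

Section GroupInverse.

Context {s g : R}.
Hypothesis sg : group_inverse s g.

Let e := s * g.

Lemma group_inverse_idem : e * e = e.
Proof. by case: sg => _ [sgs _]; rewrite /e mulrA sgs. Qed.

Lemma group_inverse_absorb :
  [/\ s * e = s, e * s = s, g * e = g & e * g = g].
Proof.
case: sg => gs [sgs gsg]; rewrite /e.
split=> //; first by rewrite -gs mulrA sgs.
  by rewrite mulrA gsg.
by rewrite -gs gsg.
Qed.

Lemma group_inverse_comm y : s * y = y * s -> g * y = y * g.
Proof.
case: sg => gs _ sy; have [se es ge eg] := group_inverse_absorb.
have ey_gys : e * y = g * y * s by rewrite /e -gs -mulrA sy mulrA.
have ye_syg : y * e = s * y * g by rewrite /e mulrA -sy.
have ey : e * y = y * e.
  apply: idem_comm_of_corners.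
    by rewrite ey_gys -mulrA absorb_r_idemC ?mulr0.
  by rewrite -mulrA ye_syg !mulrA absorb_l_idemC ?mul0r.
have -> : g * y = g * (y * e) by rewrite -ey mulrA ge.
by rewrite ye_syg !mulrA gs -/e ey -mulrA eg.
Qed.

Lemma group_inverse_comm2 a : comm2 a s -> comm2 a g.
Proof. by move=> sa y ya; apply: group_inverse_comm; apply: sa. Qed.

Lemma group_inverse_unit : s + (1 - e) \is a GRing.unit.
Proof.
case: sg => gs _; have [se es ge eg] := group_inverse_absorb.
have ee := group_inverse_idem.
apply/unitrP; exists (g + (1 - e)); split.
  rewrite mulrDl (mulrDr g) (mulrDr (1 - e) s) idemC // gs -/e.
  by rewrite absorb_r_idemC // absorb_l_idemC // add0r addr0 addrC subrK.
rewrite mulrDl (mulrDr s) (mulrDr (1 - e) g) idemC // -/e.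
by rewrite absorb_r_idemC // absorb_l_idemC // add0r addr0 addrC subrK.
Qed.

End GroupInverse.

Lemma quasipolar_decomposition {a p} :
  p * p = p -> comm2 a p -> (a + p) \is a GRing.unit -> qnil (a * p) ->
  exists s q, a = s + q /\ strongly_regular s /\ comm2 a s /\ qnil q /\
              s * q = 0 /\ q * s = 0.
Proof.
move=> pp pa uU qn; have ap : p * a = a * p by apply: comm2_comm.
have cpa : (1 - p) * a = a * (1 - p) by rewrite mulrBl mul1r ap mulrBr mulr1.
exists (a * (1 - p)), (a * p); split; first by rewrite mulrBr mulr1 subrK.
split.
  have -> : a * (1 - p) = (a + p) * (1 - p) by rewrite mulrDl idem_mulC ?addr0.
  apply: unit_idem_strongly_regular; rewrite ?idemC //.
  by rewrite mulrDr (mulrDl a p) cpa idemC_mul ?idem_mulC.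
split.
  by apply: comm2M; [exact: comm2_self | apply: comm2B; first exact: comm2_1].
split=> //; split.
  by rewrite mulrA -(mulrA a _ a) cpa -!mulrA idemC_mul ?mulr0.
by rewrite mulrA -(mulrA a p a) ap -!mulrA idem_mulC ?mulr0.
Qed.

Lemma decomposition_quasipolar {s q} :
  strongly_regular s -> comm2 (s + q) s -> qnil q -> s * q = 0 -> q * s = 0 ->
  quasipolar (s + q).
Proof.
move=> /strongly_regular_group_inverse [g sg] sa qn sq qs.
have [gs _] := sg; have [se _ _ _] := group_inverse_absorb sg.
have ee := group_inverse_idem sg.
have eq0 : s * g * q = 0 by rewrite -gs -mulrA sq mulr0.
have qe0 : q * (s * g) = 0 by rewrite mulrA qs mul0r.
exists (1 - s * g); split; first exact: idemC.
split.
  by apply: comm2B; [exact: comm2_1 | apply: comm2M; last exact: group_inverse_comm2 sg _ sa].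
split.
  have -> : s + q + (1 - s * g) = (s + (1 - s * g)) * (1 + q).
    by rewrite mulrDr mulr1 mulrDl sq add0r mulrBl mul1r eq0 subr0 addrAC.
  by rewrite unitrMr ?qnil_unit1 ?group_inverse_unit.
by rewrite mulrDl absorb_r_idemC // add0r mulrBr mulr1 qe0 subr0.
Qed.

End Quasipolar.

Theorem corollary2p17 (R : unitRingType) (a : R) :
  quasipolar a <->
  exists s q : R,
    a = s + q /\ strongly_regular s /\ comm2 a s /\ qnil q /\
    s * q = 0 /\ q * s = 0.
Proof.
split.
  by move=> [p [pp [pa [uU qn]]]]; exact: quasipolar_decomposition pp pa uU qn.
move=> [s [q [-> [sr [sa [qn [sq qs]]]]]]].
exact: decomposition_quasipolar.
Qed.
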